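(* Let $T$ be an unmixed balanced tree of height 3, labeled as in the context. Then every facet of $\mathcal{S}_{even}(T)$ has the form $V_{even}\setminus\{u_{1,a_1},\dots,u_{p,a_p}\}$ with $1\le a_i\le k_i$, and ordering the facets $F$ of $\mathcal{S}_{even}(T)$ by the order $<_P$ of their vectors $\nu(F)=(a_1,\dots,a_p)$ gives a shelling of $\mathcal{S}_{even}(T)$.
   Context: $N(v)=\{u:uv\in E\}$, $N(D)=\bigcup_{v\in D}N(v)$. A leaf is a vertex of degree 1; height of a vertex = minimum distance to a leaf; $V_k$ = vertices of height $k$; $V_{even}$, $V_{odd}$ = vertices of even/odd height; $T$ is balanced if no two adjacent vertices have the same height. A TD-set is $D$ with $N(D)=V$, minimal if no proper subset is; $T$ unmixed if all minimal TD-sets have equal size. An odd-TD-set is $D$ with $N(D)\supseteq V_{odd}$, minimal if no proper subset is one; $\mathcal{S}_{even}(T)$ is the simplicial complex on $V_{even}$ whose facets are $V_{even}\setminus D$, $D$ a minimal odd-TD-set. Labeling: in an unmixed balanced tree of height 3, each height-1 vertex has exactly one neighbor of height 2 and vice versa; write $V_1=\{s_1,\dots,s_p\}$, let $u_{i,1}$ be the unique height-2 neighbor of $s_i$ (so $V_2=\{u_{1,1},\dots,u_{p,1}\}$), $k_i=|N(s_i)|$, and $\{u_{i,2},\dots,u_{i,k_i}\}=N(s_i)\cap V_0$. For $\alpha=(a_1,\dots,a_p)$ let $\ell(\alpha)=|\{i: a_i=1\}|$; define $\alpha<_P\beta$ iff $\ell(\alpha)>\ell(\beta)$, or $\ell(\alpha)=\ell(\beta)$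 and $\alpha$ is lexicographically smaller than $\beta$. A pure simplicial complex is shelled by an ordering $F_1,\dots,F_m$ of its facets if for all $1\le i<j\le m$ there exist $v\in F_j\setminus F_i$ and $k<j$ with $F_j\setminus F_k=\{v\}$. *)

(* Finite simple graphs as symmetric irreflexive relations. *)
From mathcomp Require Import all_boot.
Set Implicit Arguments. Unset Strict Implicit. Unset Printing Implicit Defensive.

Section Graph.
Variables (V : finType) (e : rel V).

Definition nbhd (v : V) : {set V} := [set w | e v w].
Definition nbhdS (D : {set V}) : {set V} := [set w | [exists d in D, e d w]].

(* a finite tree: simple graph, connected, with |E| = |V| - 1
   (ordered pairs of adjacent vertices counted twice) *)
Definition is_tree : Prop :=
  symmetric e /\ irreflexive e /\ (forall x y : V, connect e x y) /\
  #|[set pq : V * V | e pq.1 pq.2]| = 2 * (#|V| - 1).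

Definition is_leaf (v : V) : bool := #|nbhd v| == 1.

Fixpoint ball (v : V) (n : nat) : {set V} :=
  if n is m.+1 then ball v m :|: nbhdS (ball v m) else [set v].

Definition height (v : V) : nat :=
  find (fun n => [exists w in ball v n, is_leaf w]) (iota 0 #|V|).

Definition tree_height : nat := \max_(v : V) height v.

Definition Vh (k : nat) : {set V} := [set v | height v == k].
Definition Veven : {set V} := [set v | ~~ odd (height v)].
Definition Vodd : {set V} := [set v | odd (height v)].

Definition balanced : Prop := forall x y : V, e x y -> height x != height y.

Definition is_TD (D : {set V}) : bool := nbhdS D == [set: V].
Definition minimal_TD (D : {set V}) : bool := minset is_TD D.
Definition unmixed : Prop :=
  forall D1 D2 : {set V}, minimal_TD D1 -> minimal_TD D2 -> #|D1| = #|D2|.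

Definition is_oddTD (D : {set V}) : bool := Vodd \subset nbhdS D.
Definition minimal_oddTD (D : {set V}) : bool := minset is_oddTD D.

Definition Seven_facet (F : {set V}) : Prop :=
  exists D : {set V}, minimal_oddTD D /\ F = Veven :\: D.

End Graph.

Definition ell (p : nat) (a : 'I_p -> nat) : nat := #|[set i : 'I_p | a i == 1]|.

Definition lex_lt (p : nat) (a b : 'I_p -> nat) : Prop :=
  exists i : 'I_p, a i < b i /\ (forall j : 'I_p, j < i -> a j = b j).

Definition ltP_order (p : nat) (a b : 'I_p -> nat) : Prop :=
  ell b < ell a \/ (ell a = ell b /\ lex_lt a b).

Definition Uset (V : finType) (p : nat) (u : 'I_p -> nat -> V) (a : 'I_p -> nat)
  : {set V} := [set u i (a i) | i : 'I_p].

Definition in_range (p : nat) (k a : 'I_p -> nat) : Prop :=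
  forall i : 'I_p, 1 <= a i <= k i.

From mathcomp Require Import all_boot zify.
Set Implicit Arguments. Unset Strict Implicit. Unset Printing Implicit Defensive.

(* Every vertex of height 0 or 2 is adjacent to some s_i, and a minimal odd
   total dominating set D has to dominate each s_i.  A leaf of D dominates only
   its parent, so it is redundant unless it is the only vertex of D next to that
   parent; hence D consists of exactly one neighbour u_{i,a_i} of each s_i.
   Conversely {u_{i,a_i}} is a minimal odd total dominating set iff the chosen
   height-2 vertices dominate V_3 and every chosen height-2 vertex is chosen by
   all of its height-1 neighbours; both conditions only depend on the set of
   indices with a_i = 1.
   Given a <_P b with F_b a facet, pick i with a_i < b_i.  If a_i = 1, set to 1
   every b_j whose height-2 vertex is u_{i,1}: this raises l(b).  Otherwise
   replace b_i by a_i: this keeps l(b) and decreases b lexicographically.  Both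
   moves preserve the two conditions, and the new facet contains every vertex of
   F_b except u_{i,a_i}. *)

Lemma count_geq_iota m n : count (leq m) (iota 0 n) = n - m.
Proof.
elim: n => [|n IH] //; rewrite -addn1 iotaD count_cat IH /= addn0; lia.
Qed.

Lemma card_ord_geq n m : #|[set a : 'I_n | m <= a]| = n - m.
Proof.
by rewrite cardsE cardE size_filter -count_geq_iota -val_enum_ord count_map enumT.
Qed.

Lemma setDD_subset (T : finType) (S A B : {set T}) :
  A \subset S -> (S :\: B) :\: (S :\: A) = A :\: B.
Proof.
move/subsetP=> AS; apply/setP => x; rewrite !inE negb_and negbK.
case: (boolP (x \in A)) => [/AS-> | _]; first by rewrite andbT.
by rewrite andbF /=; case: (x \in S); rewrite ?andbF.
Qed.

Lemma setDDK (T : finType) (S A : {set T}) : A \subset S -> S :\: (S :\: A) = A.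
Proof. by move=> AS; rewrite setDDr setDv set0U; apply/setIidPr. Qed.

Definition ones p (c : 'I_p -> nat) : {set 'I_p} := [set j | c j == 1].

Lemma ellE p (c : 'I_p -> nat) : ell c = #|ones c|.
Proof. by []. Qed.

Lemma ltP_order_exists_lt p (a b : 'I_p -> nat) :
  (forall i, 0 < b i) -> ltP_order a b -> exists i, a i < b i.
Proof.
move=> b_gt0 [ell_lt | [_ [i [ab_i _]]]]; last by exists i.
have : ~~ (ones a \subset ones b).
  by apply: contraTN ell_lt => /subset_leq_card; rewrite !ellE -leqNgt.
case/subsetPn => i; rewrite !inE => /eqP a_1 b_ne1.
by exists i; rewrite a_1 ltn_neqAle eq_sym b_ne1 b_gt0.
Qed.

Lemma mem_Uset (V : finType) p (u : 'I_p -> nat -> V) (a : 'I_p -> nat) i :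
  u i (a i) \in Uset u a.
Proof. by apply/imsetP; exists i. Qed.

Lemma UsetD_set1 (V : finType) p (u : 'I_p -> nat -> V) (b c : 'I_p -> nat) i x :
  c i = x -> u i x \notin Uset u b -> (forall j, c j = b j \/ u j (c j) = u i x) ->
  Uset u c :\: Uset u b = [set u i x].
Proof.
move=> <- notin_b cb; apply/setP => v; rewrite in_setD in_set1.
apply/andP/eqP => [[v_b /imsetP[j _ vj]] | ->]; last by rewrite notin_b mem_Uset.
by subst v; case: (cb j) => [cbj | //]; move: v_b; rewrite cbj mem_Uset.
Qed.

Section Height.
Variables (V : finType) (e : rel V).
Local Notation h := (height e).
Local Notation leaf_within v n := [exists w in ball e v n, is_leaf e w].

Lemma mem_nbhd v w : (w \in nbhd e v) = e v w.
Proof. by rewrite inE. Qed.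

Lemma mem_nbhdS D w : (w \in nbhdS e D) = [exists d in D, e d w].
Proof. by rewrite inE. Qed.

Lemma leaf_nbr_uniq w x y : is_leaf e w -> e w x -> e w y -> x = y.
Proof.
move=> /cards1P[z Nw]; rewrite -!mem_nbhd Nw.
by move=> /set1P-> /set1P->.
Qed.

Lemma ball_self v n : v \in ball e v n.
Proof. by elim: n => [|n IH] /=; rewrite !inE ?IH. Qed.

Lemma ballS v n : ball e v n.+1 = ball e v n :|: nbhdS e (ball e v n).
Proof. by []. Qed.

Lemma ball_sub_nbr x y n : e y x -> ball e x n \subset ball e y n.+1.
Proof.
move=> eyx; elim: n => [|n IH]; apply/subsetP => w.
  by move/set1P->; rewrite ballS !inE; apply/orP; right; apply/existsP; exists y; rewrite inE eqxx.
rewrite ballS (ballS y) => /setUP[/(subsetP IH) wy | ]; first by apply/setUP; left.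
rewrite mem_nbhdS => /existsP[z /andP[/(subsetP IH) zy ezw]].
by apply/setUP; right; rewrite mem_nbhdS; apply/existsP; exists z; rewrite zy.
Qed.

Lemma ball_succ_nbr d n w :
  w \in ball e d n.+1 -> w = d \/ exists2 x, e d x & w \in ball e x n.
Proof.
elim: n w => [|n IH] w; rewrite ballS => /setUP[]; rewrite ?mem_nbhdS.
- by move/set1P; left.
- by case/existsP=> z /andP[/set1P-> edw]; right; exists w; rewrite ?inE.
- by case/IH=> [|[x edx wx]]; [left | right; exists x; rewrite // ballS inE wx].
case/existsP=> z /andP[/IH[->|[x edx zx]] ezw]; right; first by exists w; rewrite // ball_self.
exists x; rewrite // ballS; apply/setUP; right.
by rewrite mem_nbhdS; apply/existsP; exists z; rewrite zx.
Qed.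

Lemma height_le_card v : h v <= #|V|.
Proof. by rewrite -[leqRHS](size_iota 0) find_size. Qed.

Lemma height_min v n : leaf_within v n -> h v <= n.
Proof.
move=> lv; case: (ltnP n #|V|) => [n_lt|]; last exact: leq_trans (height_le_card v).
rewrite leqNgt; apply/negP => /(before_find 0).
by rewrite nth_iota // add0n lv.
Qed.

Lemma height_spec v : h v < #|V| -> leaf_within v (h v).
Proof.
move=> hv; have /(nth_find 0) : has (fun n => leaf_within v n) (iota 0 #|V|).
  by rewrite has_find size_iota.
by rewrite nth_iota ?add0n.
Qed.

Lemma height_nbr x y : e x y -> h x <= (h y).+1.
Proof.
move=> exy; case: (ltnP (h y) #|V|) => [/height_spec/existsP[w /andP[wy lw]] | hy].
  by apply: height_min; apply/existsP; exists w; rewrite (subsetP (ball_sub_nbr _ exy)).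
exact: leq_trans (height_le_card x) (leq_trans hy _).
Qed.

Lemma height_eq0 v : (h v == 0) = is_leaf e v.
Proof.
apply/eqP/idP => [hv0 | lv]; last first.
  by apply/eqP; rewrite -leqn0; apply: height_min; apply/existsP; exists v; rewrite ball_self.
have /height_spec : h v < #|V| by rewrite hv0; apply/card_gt0P; exists v.
by rewrite hv0 => /existsP[w /andP[/set1P-> ]].
Qed.

Lemma height_pred_nbr d n : h d = n.+1 -> h d < #|V| -> exists2 x, e d x & h x = n.
Proof.
move=> hd /height_spec/existsP[w /andP[]]; rewrite hd => /ball_succ_nbr[-> ld|[x edx wx] lw].
  by move: ld; rewrite -height_eq0 hd.
have hx : h x <= n by apply: height_min; apply/existsP; exists w; rewrite wx.
have := height_nbr edx; rewrite hd ltnS => nx.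
by exists x => //; apply/eqP; rewrite eqn_leq hx nx.
Qed.

End Height.

Section OddTotalDomination.
Variables (V : finType) (e : rel V).

Lemma is_oddTD_subset (B C : {set V}) : B \subset C -> is_oddTD e B -> is_oddTD e C.
Proof.
move=> /subsetP BC /subsetP Bdom; apply/subsetP => y /Bdom.
rewrite !mem_nbhdS => /existsP[d /andP[/BC dC edy]].
by apply/existsP; exists d; rewrite dC.
Qed.

Lemma minimal_oddTDP D :
  reflect (is_oddTD e D /\ forall x, x \in D -> ~~ is_oddTD e (D :\ x))
          (minimal_oddTD e D).
Proof.
apply: (iffP minsetP) => [[Ddom Dmin] | [Ddom Dnec]]; split=> //.
  by move=> x xD; apply/negP => /Dmin/(_ (subD1set D x))/setP/(_ x); rewrite !inE eqxx xD.
move=> B Bdom BD; apply/eqP; rewrite eqEsubset BD; apply/subsetP => x xD.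
apply/negPn/negP => xB; case/negP: (Dnec x xD); apply: is_oddTD_subset Bdom.
by apply/subsetP => z zB; rewrite !inE (subsetP BD) // andbT; apply: contraNneq xB => <-.
Qed.

Lemma is_oddTD_setD1_leaf D x w z :
  is_oddTD e D -> is_leaf e x -> e x w -> z \in D -> z != x -> e z w ->
  is_oddTD e (D :\ x).
Proof.
move=> /subsetP Ddom lx exw zD zx ezw; apply/subsetP => y /Ddom.
rewrite !mem_nbhdS => /existsP[d /andP[dD edy]].
case: (eqVneq d x) => [dx | dx]; last by apply/existsP; exists d; rewrite !inE dx dD.
have -> : y = w by apply: leaf_nbr_uniq lx _ exw; rewrite -dx.
by apply/existsP; exists z; rewrite !inE zx zD.
Qed.

Lemma minimal_oddTD_sub_Veven D :
  (forall x y, e x y -> odd (height e x) != odd (height e y)) ->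
  minimal_oddTD e D -> D \subset Veven e.
Proof.
move=> parity /minimal_oddTDP[/subsetP Ddom Dnec]; apply/subsetP => d dD.
rewrite inE; apply/negP => od; case/negP: (Dnec d dD); apply/subsetP => y oy.
have := Ddom y oy; rewrite !mem_nbhdS => /existsP[z /andP[zD ezy]].
apply/existsP; exists z; rewrite !inE zD ezy !andbT.
by apply/eqP => zd; move: (parity z y ezy) oy; rewrite zd inE od; case: odd.
Qed.

End OddTotalDomination.

Section Balanced.
Variables (V : finType) (e : rel V).
Hypotheses (e_sym : symmetric e) (e_bal : balanced e).
Local Notation h := (height e).

Lemma balanced_height_nbr x y : e x y -> h x = (h y).+1 \/ h y = (h x).+1.
Proof.
move=> exy; have eyx : e y x by rewrite e_sym.
have := e_bal exy; have := height_nbr exy; have := height_nbr eyx.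
case: (ltngtP (h x) (h y)) => [xy yx _ | yx _ xy _ | //].
- by right; apply/eqP; rewrite eqn_leq xy yx.
- by left; apply/eqP; rewrite eqn_leq xy yx.
Qed.

Lemma odd_height_nbr x y : e x y -> odd (h x) != odd (h y).
Proof. by case/balanced_height_nbr => ->; rewrite /=; case: odd. Qed.

End Balanced.

Section Labeling.
Variables (V : finType) (e : rel V) (p : nat).
Variables (s : 'I_p -> V) (k : 'I_p -> nat) (u : 'I_p -> nat -> V).
Hypotheses (e_sym : symmetric e) (e_bal : balanced e) (height3 : tree_height e = 3).
Hypotheses (s_inj : injective s) (V1_s : [set s i | i : 'I_p] = Vh e 1).
Hypothesis V2_nbr_s : forall i, nbhd e (s i) :&: Vh e 2 = [set u i 1].
Hypothesis k_card : forall i, k i = #|nbhd e (s i)|.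
Hypothesis V0_nbr_s : forall i,
  [set u i (val a) | a : 'I_(k i).+1 & 2 <= val a] = nbhd e (s i) :&: Vh e 0.
Local Notation h := (height e).

Lemma height_le3 v : h v <= 3.
Proof. by rewrite -height3; apply: leq_bigmax. Qed.

Lemma card_gt2 : 2 < #|V|.
Proof. by rewrite -height3; apply/bigmax_leqP => v _; apply: height_le_card. Qed.

Lemma height_s i : h (s i) = 1.
Proof. by have /setP/(_ (s i)) := V1_s; rewrite imset_f // inE => /esym/eqP. Qed.

Lemma height1_s y : h y = 1 -> exists i, y = s i.
Proof.
by move=> hy; have /setP/(_ y) := V1_s; rewrite inE hy eqxx => /imsetP[i _ ->]; exists i.
Qed.

Lemma nbr_s_height i y : e (s i) y -> h y = 0 \/ h y = 2.
Proof. by case/(balanced_height_nbr e_sym e_bal); rewrite height_s; lia. Qed.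

Lemma k_gt0 i : 0 < k i.
Proof.
have /setP/(_ (u i 1)) := V2_nbr_s i; rewrite !inE eqxx => /andP[u1 _].
by rewrite k_card; apply/card_gt0P; exists (u i 1); rewrite inE.
Qed.

Lemma u_adj_height i x :
  1 <= x <= k i -> e (s i) (u i x) /\ h (u i x) = if x == 1 then 2 else 0.
Proof.
case/andP; rewrite leq_eqVlt => /orP[/eqP<- _ | x_gt1 x_le].
  by have /setP/(_ (u i 1)) := V2_nbr_s i; rewrite !inE eqxx => /andP[-> /eqP].
have x_lt : x < (k i).+1 by rewrite ltnS.
have /setP/(_ (u i x)) := V0_nbr_s i; rewrite !inE (gtn_eqF x_gt1).
by rewrite (imset_f _ (_ : Ordinal x_lt \in _)) ?inE // => /esym/andP[-> /eqP].
Qed.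

Lemma nbr_s_u i y : e (s i) y -> exists2 x, 1 <= x <= k i & y = u i x.
Proof.
move=> sy; case: (nbr_s_height sy) => hy.
  have /setP/(_ y) := V0_nbr_s i; rewrite !inE sy hy eqxx => /imsetP[a].
  by rewrite inE => a_ge2 ->; exists a => //; rewrite (leq_trans _ a_ge2) // -ltnS ltn_ord.
have /setP/(_ y) := V2_nbr_s i; rewrite !inE sy hy => /esym/eqP->.
by exists 1; rewrite ?k_gt0.
Qed.

Lemma nbhd_s_setD_V0 i : nbhd e (s i) :\: Vh e 0 = [set u i 1].
Proof.
rewrite -V2_nbr_s; apply/setP => y; rewrite !inE.
case: (boolP (e (s i) y)) => [sy | _]; rewrite ?andbT ?andbF //.
by case: (nbr_s_height sy) => ->.
Qed.

Lemma u_leaf_inj i : {in [pred x | 2 <= x <= k i] &, injective (u i)}.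
Proof.
(* k_i - 1 labels cover the k_i - 1 leaves next to s_i *)
set A := [set a : 'I_(k i).+1 | 2 <= val a].
have card_uA : #|[set u i (val a) | a in A]| = #|A|.
  rewrite V0_nbr_s card_ord_geq subSS subn1 k_card.
  by rewrite -(cardsID (Vh e 0) (nbhd e (s i))) nbhd_s_setD_V0 cards1 addn1.
move=> x y /andP[x_ge2 x_le] /andP[y_ge2 y_le] uxy.
have x_lt : x < (k i).+1 by rewrite ltnS.
have y_lt : y < (k i).+1 by rewrite ltnS.
have /eqP/imset_injP inj := card_uA.
by have := inj (Ordinal x_lt) (Ordinal y_lt); rewrite !inE => /(_ x_ge2 y_ge2 uxy) [].
Qed.

Lemma u_eq i j x y :
  1 <= x <= k i -> 1 <= y <= k j -> u i x = u j y -> x = y /\ (x = 1 \/ i = j).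
Proof.
move=> x_rng y_rng uxy; have [sx hx] := u_adj_height x_rng.
have [sy hy] := u_adj_height y_rng.
have xy1 : (x == 1) = (y == 1) by move: hy; rewrite -uxy hx; case: (x == 1); case: (y == 1).
case: (eqVneq x 1) xy1 => [-> /esym/eqP-> | x_ne1 /esym y_ne1]; first by split=> //; left.
have leaf_ux : is_leaf e (u i x) by rewrite -height_eq0 hx (negbTE x_ne1).
have ij : i = j by apply: s_inj; apply: (leaf_nbr_uniq leaf_ux); rewrite e_sym // uxy.
subst j; split; last by right.
apply: (u_leaf_inj _ _ uxy); rewrite inE.
- by case/andP: x_rng => x_gt0 ->; rewrite andbT ltn_neqAle eq_sym x_ne1.
- by case/andP: y_rng => y_gt0 ->; rewrite andbT ltn_neqAle eq_sym y_ne1.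
Qed.

Lemma nbr_Veven_s d : ~~ odd (h d) -> exists i, e (s i) d.
Proof.
move=> even_d; suff [w dw /height1_s[i wi]] : exists2 w, e d w & h w = 1.
  by exists i; rewrite -wi e_sym.
move: even_d (height_le3 d); case hd: (h d) => [|[|[|[|]]]] //= _ _.
  have /cards1P[w Nd] : is_leaf e d by rewrite -height_eq0 hd.
  have dw : e d w by rewrite -mem_nbhd Nd set11.
  by exists w => //; case: (balanced_height_nbr e_sym e_bal dw); rewrite hd.
by apply: (height_pred_nbr hd); rewrite hd card_gt2.
Qed.

Lemma minimal_oddTD_Uset D : minimal_oddTD e D -> exists2 a, in_range k a & D = Uset u a.
Proof.
move=> minD; have /minimal_oddTDP[/subsetP Ddom Dnec] := minD.
have s_dom i : exists2 z, z \in D & e (s i) z.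
  have := Ddom (s i); rewrite inE height_s mem_nbhdS => /(_ isT)/existsP[z /andP[zD zs]].
  by exists z; rewrite // e_sym.
have : forall i, exists x, [/\ 1 <= x <= k i, u i x \in D & u i 1 \in D -> x = 1].
  move=> i; case: (boolP (u i 1 \in D)) => [u1D | u1D]; first by exists 1; rewrite k_gt0.
  have [z zD /nbr_s_u[x x_rng zx]] := s_dom i.
  by exists x; split; rewrite // -zx.
case/fin_all_exists => a Ha; exists a => [i | ]; first by case: (Ha i).
apply/setP => d; apply/idP/imsetP => [dD | [j _ ->]]; last by case: (Ha j).
have even_d : ~~ odd (h d).
  by have := subsetP (minimal_oddTD_sub_Veven (odd_height_nbr e_sym e_bal) minD) d dD; rewrite inE.
have [j jd] := nbr_Veven_s even_d; exists j => //.
have [x x_rng dx] := nbr_s_u jd; have [_ hd] := u_adj_height x_rng.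
case: (Ha j) => a_rng aD a1; case: (eqVneq x 1) hd => [x1 | x_ne1] hd.
  by rewrite a1 -x1 // -dx.
apply/eqP; apply: contraNT (Dnec d dD) => ad.
apply: (@is_oddTD_setD1_leaf _ _ D d (s j) (u j (a j))) => //.
- exact/subsetP.
- by rewrite -height_eq0 dx hd.
- by rewrite e_sym.
- by rewrite eq_sym.
- by rewrite e_sym; case: (u_adj_height a_rng).
Qed.

Definition dominates_V3 (J : {set 'I_p}) : Prop :=
  forall y, h y = 3 -> exists2 j, j \in J & e (u j 1) y.

Definition u1_saturated (J : {set 'I_p}) : Prop :=
  forall j l, u j 1 = u l 1 -> l \in J -> j \in J.

Lemma minimal_oddTD_UsetP c : in_range k c ->
  minimal_oddTD e (Uset u c) <-> dominates_V3 (ones c) /\ u1_saturated (ones c).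
Proof.
move=> c_rng; have u1_rng j : 1 <= 1 <= k j by rewrite k_gt0.
split=> [/minimal_oddTDP[/subsetP Udom Unec] | [domV3 sat]]; [split | apply/minimal_oddTDP; split].
- move=> y hy; have := Udom y; rewrite inE hy mem_nbhdS => /(_ isT)/existsP[z].
  case/andP=> /imsetP[j _ ->] ey; have [_ hu] := u_adj_height (c_rng j).
  case: (eqVneq (c j) 1) hu => [cj1 | _] hu; last first.
    by case: (balanced_height_nbr e_sym e_bal ey); rewrite hy hu.
  by exists j; rewrite ?inE ?cj1 // -cj1.
- move=> j l ujl; rewrite !inE => /eqP cl1; apply/contraT => cj_ne1.
  have [sj hj] := u_adj_height (c_rng j); have [sj1 _] := u_adj_height (u1_rng j).
  case/negP: (Unec _ (mem_Uset u c j)).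
  apply: (@is_oddTD_setD1_leaf _ _ _ _ (s j) (u j 1)).
  + exact/subsetP.
  + by rewrite -height_eq0 hj (negbTE cj_ne1).
  + by rewrite e_sym.
  + by rewrite ujl -cl1 mem_Uset.
  + by apply: contra cj_ne1 => /eqP/(u_eq (u1_rng j) (c_rng j))[<-].
  + by rewrite e_sym.
- apply/subsetP => y; rewrite inE mem_nbhdS => odd_y.
  move: odd_y (height_le3 y); case hy: (h y) => [|[|[|[|]]]] //= _ _.
    have [j ->] := height1_s hy; apply/existsP; exists (u j (c j)).
    by rewrite mem_Uset e_sym; case: (u_adj_height (c_rng j)).
  have [j] := domV3 y hy; rewrite inE => /eqP cj1 ujy.
  by apply/existsP; exists (u j 1); rewrite ujy andbT -{1}cj1 mem_Uset.
- move=> _ /imsetP[j _ ->]; apply/negP => /subsetP/(_ (s j)).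
  rewrite inE height_s mem_nbhdS => /(_ isT)/existsP[z].
  rewrite !inE => /andP[/andP[ucj_ne /imsetP[l _ zl]]]; subst z.
  rewrite e_sym => /nbr_s_u[x x_rng ulx].
  have [clx [cl1 | lj]] := u_eq (c_rng l) x_rng ulx; last by rewrite ulx -clx lj eqxx in ucj_ne.
  have : j \in ones c by apply: (sat j l); rewrite ?inE ?cl1 // -{2}cl1 ulx -clx cl1.
  rewrite inE => /eqP cj1.
  by rewrite ulx -clx cl1 -cj1 eqxx in ucj_ne.
Qed.

Lemma Uset_sub_Veven c : in_range k c -> Uset u c \subset Veven e.
Proof.
move=> c_rng; apply/subsetP => _ /imsetP[j _ ->]; rewrite inE.
by case: (u_adj_height (c_rng j)) => _ ->; case: eqP.
Qed.

Lemma Seven_facet_UsetP c : in_range k c ->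
  Seven_facet e (Veven e :\: Uset u c) <-> minimal_oddTD e (Uset u c).
Proof.
move=> c_rng; split=> [[D [minD UD]] | minU]; last by exists (Uset u c).
have D_even := minimal_oddTD_sub_Veven (odd_height_nbr e_sym e_bal) minD.
by move/(congr1 (setD (Veven e))): UD; rewrite !setDDK ?Uset_sub_Veven // => ->.
Qed.

Lemma u_notin_Uset b i x : in_range k b -> u1_saturated (ones b) ->
  1 <= x <= k i -> x < b i -> u i x \notin Uset u b.
Proof.
move=> b_rng sat x_rng x_lt; apply/imsetP => -[j _ uxb].
have [xb [x1 | ij]] := u_eq x_rng (b_rng j) uxb.
  have : i \in ones b.
    by apply: (sat i j); [rewrite -{1}x1 uxb -xb x1 | rewrite inE -xb x1].
  by rewrite inE -x1 => /eqP bi; rewrite bi ltnn in x_lt.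
by move: x_lt; rewrite xb ij ltnn.
Qed.

Lemma shelling_step_parent b i :
  in_range k b -> dominates_V3 (ones b) -> u1_saturated (ones b) -> 1 < b i ->
  exists c, [/\ in_range k c, minimal_oddTD e (Uset u c), ltP_order c b &
                Uset u c :\: Uset u b = [set u i 1]].
Proof.
move=> b_rng domb satb bi_gt1; pose c j := if u j 1 == u i 1 then 1 else b j.
have c_rng : in_range k c by move=> j; rewrite /c; case: ifP => _; rewrite ?k_gt0 ?b_rng.
have onesE : ones c = ones b :|: [set j | u j 1 == u i 1].
  by apply/setP => j; rewrite !inE /c; case: ifP; rewrite ?orbT ?orbF.
have ci : c i = 1 by rewrite /c eqxx.
exists c; split => //.
- apply/(minimal_oddTD_UsetP c_rng); rewrite onesE; split.
    by move=> y /domb[j jb ujy]; exists j; rewrite // inE jb.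
  move=> j l ujl; rewrite in_setU inE => /orP[lb | /eqP uli].
    by rewrite in_setU (satb _ _ ujl lb).
  by rewrite !inE ujl uli eqxx orbT.
- left; rewrite !ellE onesE; apply: proper_card.
  apply/properP; split; first exact: subsetUl.
  by exists i; rewrite !inE ?eqxx ?orbT // gtn_eqF.
- apply: UsetD_set1 ci _ _; first by rewrite u_notin_Uset ?k_gt0.
  by move=> j; rewrite /c; case: eqP => [-> | _]; [right | left].
Qed.

Lemma shelling_step_leaf b i x :
  in_range k b -> dominates_V3 (ones b) -> u1_saturated (ones b) -> 2 <= x < b i ->
  exists c, [/\ in_range k c, minimal_oddTD e (Uset u c), ltP_order c b &
                Uset u c :\: Uset u b = [set u i x]].
Proof.
move=> b_rng domb satb /andP[x_ge2 x_lt]; pose c j := if j == i then x else b j.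
have x_rng : 1 <= x <= k i.
  by case/andP: (b_rng i) => _ /(leq_trans (ltnW x_lt)) ->; rewrite (leq_trans _ x_ge2).
have c_rng : in_range k c by move=> j; rewrite /c; case: (eqVneq j i) => [-> | _].
have onesE : ones c = ones b.
  apply/setP => j; rewrite !inE /c; case: (eqVneq j i) => [-> | //].
  by rewrite !gtn_eqF // (leq_trans x_ge2 (ltnW x_lt)).
have ci : c i = x by rewrite /c eqxx.
exists c; split => //.
- by apply/(minimal_oddTD_UsetP c_rng); rewrite onesE.
- right; split; first by rewrite !ellE onesE.
  exists i; split; first by rewrite ci.
  by move=> j ji; rewrite /c; case: (eqVneq j i) => [jE | //]; rewrite jE ltnn in ji.
- apply: UsetD_set1 ci _ _; first by rewrite u_notin_Uset.
  by move=> j; rewrite /c; case: (eqVneq j i) => [-> | _]; [right | left].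
Qed.

Lemma shelling_step b i x :
  in_range k b -> minimal_oddTD e (Uset u b) -> 1 <= x < b i ->
  exists c, [/\ in_range k c, minimal_oddTD e (Uset u c), ltP_order c b &
                Uset u c :\: Uset u b = [set u i x]].
Proof.
move=> b_rng /(minimal_oddTD_UsetP b_rng)[domb satb] /andP[x_gt0 x_lt].
case: (eqVneq x 1) => [x1 | x_ne1]; first by subst x; apply: shelling_step_parent.
by apply: shelling_step_leaf; rewrite // x_lt andbT ltn_neqAle eq_sym x_ne1.
Qed.

Lemma Seven_facet_Uset F : Seven_facet e F -> exists a, in_range k a /\ F = Veven e :\: Uset u a.
Proof. by case=> D [/minimal_oddTD_Uset[a a_rng ->] ->]; exists a. Qed.

Lemma Seven_facet_shelling a b :
  in_range k a -> in_range k b -> Seven_facet e (Veven e :\: Uset u b) -> ltP_order a b ->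
  exists2 v : V, v \in (Veven e :\: Uset u b) :\: (Veven e :\: Uset u a) &
    exists c : 'I_p -> nat,
      [/\ in_range k c, Seven_facet e (Veven e :\: Uset u c), ltP_order c b &
          (Veven e :\: Uset u b) :\: (Veven e :\: Uset u c) = [set v]].
Proof.
move=> a_rng b_rng /(Seven_facet_UsetP b_rng) minb ab.
have [i ab_i] : exists i, a i < b i.
  by apply: ltP_order_exists_lt ab => i; case/andP: (b_rng i).
have [|c [c_rng minc cb UcD]] := shelling_step b_rng minb (_ : 1 <= a i < b i).
  by rewrite ab_i andbT; have /andP[] := a_rng i.
have := set11 (u i (a i)); rewrite -UcD in_setD => /andP[notin_b _].
exists (u i (a i)); first by rewrite setDD_subset ?Uset_sub_Veven // in_setD notin_b mem_Uset.
exists c; split => //; first exact/Seven_facet_UsetP.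
by rewrite setDD_subset ?Uset_sub_Veven.
Qed.

End Labeling.

Theorem theorem4p22 (V : finType) (e : rel V)
  (p : nat) (s : 'I_p -> V) (k : 'I_p -> nat) (u : 'I_p -> nat -> V) :
  is_tree e -> balanced e -> unmixed e -> tree_height e = 3 ->
  (* labeling *)
  injective s ->
  [set s i | i : 'I_p] = Vh e 1 ->
  (forall i : 'I_p, nbhd e (s i) :&: Vh e 2 = [set u i 1]) ->
  (forall i : 'I_p, k i = #|nbhd e (s i)|) ->
  (forall i : 'I_p,
     [set u i (val a) | a : 'I_(k i).+1 & 2 <= val a] = nbhd e (s i) :&: Vh e 0) ->
  (* every facet has the form V_even \ {u_{1,a_1},...,u_{p,a_p}} *)
  (forall F : {set V}, Seven_facet e F ->
     exists a : 'I_p -> nat, in_range k a /\ F = Veven e :\: Uset u a) /\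
  (* ordering facets by <_P of nu(F) is a shelling *)
  (forall a b : 'I_p -> nat,
     in_range k a -> in_range k b ->
     Seven_facet e (Veven e :\: Uset u a) ->
     Seven_facet e (Veven e :\: Uset u b) ->
     ltP_order a b ->
     exists2 v : V,
       v \in (Veven e :\: Uset u b) :\: (Veven e :\: Uset u a) &
       exists c : 'I_p -> nat,
         [/\ in_range k c, Seven_facet e (Veven e :\: Uset u c), ltP_order c b &
             (Veven e :\: Uset u b) :\: (Veven e :\: Uset u c) = [set v]]).
Proof.
move=> [e_sym _] e_bal _ height3 s_inj V1_s V2_nbr_s k_card V0_nbr_s; split.
  exact: (Seven_facet_Uset e_sym e_bal height3 V1_s V2_nbr_s k_card V0_nbr_s).
move=> a b a_rng b_rng _.
exact: (Seven_facet_shelling e_sym e_bal height3 s_inj V1_s V2_nbr_s k_card V0_nbr_s).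
Qed.
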